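(* Given an LDODOSP instance, period counters $(S^d,T^d)_{d\in\{1,\dots,D\}}$ are feasible if and only if they satisfy all of the following: $T^1=0$; for all $1\le d\le D-1$: $S^d\le S^{d+1}$, $T^d\le T^{d+1}$, $T^{d+1}\le S^d$, $S^{d+1}\le T^d+N$; $T^{l_w}=0$ and $S^{D-l_w+1}=S^D$; $T^{d+l_w}\le S^d$ for all $1\le d\le D-l_w$; $S^d\le T^{d+u_w}$ for all $1\le d\le D-u_w$; $S^1=S^{l_o}$ and $T^{D-l_o+1}=T^D$; $S^{d+l_o}-N\le T^d$ for all $1\le d\le D-l_o$; $T^d+N\le S^{d+u_o}$ for all $1\le d\le D-u_o$; $r_l^d\le S^d-T^d\le r_u^d$ for all $1\le d\le D$.
   Context: An instance of the Days On Days Off Scheduling Problem (DODOSP) consists of integers $D\ge 1$ (days), $N\ge 1$ (workers), bounds $l_w,u_w,l_o,u_o,U_w,U_o\in\mathbb{N}$, and for each day $d\in\{1,\dots,D\}$ integers $0\le r_l^d\le r_u^d\le N$. A schedule is a map $f:\{n_1,\dots,n_N\}\times\{1,\dots,D\}\to\{\mathrm{ON},\mathrm{OFF}\}$ (not cyclic). A work period (resp. off period) of a worker is an inclusion-wise maximal set of consecutive days on which the worker is ON (resp. OFF). A schedule is feasible if on every day $d$ the number of workers that are ON lies in $[r_l^d,r_u^d]$, every work period has length between $l_w$ and $u_w$, every off period has length between $l_o$ and $u_o$, every worker is ON on at most $U_w$ days and OFF on at most $U_o$ days. The LDODOSP is the DODOSP restricted to instances with $U_w=U_o=D$. Integers $(S^d,T^d)_{d\in\{1,\dots,D\}}$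 are called period counters if there is some schedule for $N$ workers on $D$ days (not necessarily feasible) such that for each $d$, $S^d$ is the number of work periods (over all workers) whose first day is among days $1,\dots,d$, and $T^d$ is the number of work periods whose last day is among days $1,\dots,d-1$; they then represent that schedule. Period counters are feasible if they represent a feasible schedule of the instance. *)

From mathcomp Require Import all_boot.
Set Implicit Arguments. Unset Strict Implicit. Unset Printing Implicit Defensive.

(* An instance of DODOSP. Days are 1..D; the per-day bounds rl, ru are only
   meaningful on days 1..D. *)
Record instance := Instance {
  D : nat; N : nat;
  lw : nat; uw : nat; lo : nat; uo : nat; Uw : nat; Uo : nat;
  rl : nat -> nat; ru : nat -> nat }.

Definition valid_instance (I : instance) : Prop :=
  1 <= D I /\ 1 <= N I /\
  (forall d, 1 <= d <= D I -> rl I d <= ru I d /\ ru I d <= N I).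

Definition LDODOSP_instance (I : instance) : Prop :=
  valid_instance I /\ Uw I = D I /\ Uo I = D I.

(* A schedule: worker n is ON on day d iff f n d = true.  Only days 1..D
   are ever inspected by the definitions below. *)
Definition schedule (I : instance) := 'I_(N I) -> nat -> bool.

Section Sched.
Variables (I : instance) (f : schedule I).

Definition work_period (n : 'I_(N I)) (a b : nat) : Prop :=
  1 <= a /\ a <= b /\ b <= D I /\
  (forall d, a <= d <= b -> f n d) /\
  ((a == 1) || ~~ f n a.-1) /\
  ((b == D I) || ~~ f n b.+1).

Definition off_period (n : 'I_(N I)) (a b : nat) : Prop :=
  1 <= a /\ a <= b /\ b <= D I /\
  (forall d, a <= d <= b -> ~~ f n d) /\
  ((a == 1) || f n a.-1) /\
  ((b == D I) || f n b.+1).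

Definition num_on (d : nat) : nat := \sum_(n < N I) f n d.

Definition days_on (n : 'I_(N I)) : nat := \sum_(1 <= d < (D I).+1) f n d.
Definition days_off (n : 'I_(N I)) : nat := \sum_(1 <= d < (D I).+1) ~~ f n d.

Definition feasible_schedule : Prop :=
  (forall d, 1 <= d <= D I -> rl I d <= num_on d <= ru I d) /\
  (forall n a b, work_period n a b -> lw I <= b - a + 1 <= uw I) /\
  (forall n a b, off_period n a b -> lo I <= b - a + 1 <= uo I) /\
  (forall n, days_on n <= Uw I) /\
  (forall n, days_off n <= Uo I).

Definition starts_at (n : 'I_(N I)) (d : nat) : bool :=
  f n d && ((d == 1) || ~~ f n d.-1).
Definition ends_at (n : 'I_(N I)) (d : nat) : bool :=
  f n d && ((d == D I) || ~~ f n d.+1).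

Definition S_count (d : nat) : nat :=
  \sum_(1 <= e < d.+1) \sum_(n < N I) starts_at n e.
(* number of work periods whose last day is among 1..d-1 *)
Definition T_count (d : nat) : nat :=
  \sum_(1 <= e < d) \sum_(n < N I) ends_at n e.

Definition represents (S T : nat -> nat) : Prop :=
  forall d, 1 <= d <= D I -> S d = S_count d /\ T d = T_count d.

End Sched.

Definition period_counters (I : instance) (S T : nat -> nat) : Prop :=
  exists f : schedule I, represents f S T.

Definition feasible_counters (I : instance) (S T : nat -> nat) : Prop :=
  exists f : schedule I, represents f S T /\ feasible_schedule f.

(* For a single worker let s(d) be the number of its work periods started by
   day d and t(d) the number of those ended before day d.  Then
   s(d) = t(d) + [ON on day d]; if work periods last at least l days, every
   period ending before day d + l started by day d, so t(d + l) <= s(d); if they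
   last at most u days, s(d) <= t(d + u).  Off periods start right after work
   periods end and end right before they start, so up to a constant shift they
   are counted by (t + 1, s) and obey the same bounds.  Summing over the N
   workers gives the conditions, N entering exactly where the single-worker
   bounds contain 1.
   Conversely, number the work periods 0, 1, 2, ... in order of start and give
   period k to worker k mod N.  On day d the active periods are
   T(d), ..., S(d) - 1, at most N consecutive numbers, so each worker holds at
   most one of them and keeps the same one through a run of ON days; the
   conditions on (S, T) bound its work periods and, via the complement, those
   on (T + N, S) bound its off periods. *)

From mathcomp Require Import all_boot zify.
Set Implicit Arguments. Unset Strict Implicit. Unset Printing Implicit Defensive.

Section Counters.
Variables (D : nat) (h : nat -> bool).

Definition starts (e : nat) : bool := h e && ((e == 1) || ~~ h e.-1).
Definition ends (e : nat) : bool := h e && ((e == D) || ~~ h e.+1).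
Definition nstarts (d : nat) : nat := \sum_(1 <= e < d.+1) starts e.
Definition nends (d : nat) : nat := \sum_(1 <= e < d) ends e.

(* [work_period f n] unfolds to [run (D I) (f n)]. *)
Definition run (a b : nat) : Prop :=
  1 <= a /\ a <= b /\ b <= D /\
  (forall d, a <= d <= b -> h d) /\
  ((a == 1) || ~~ h a.-1) /\
  ((b == D) || ~~ h b.+1).

Lemma nstarts0 : nstarts 0 = 0. Proof. by rewrite /nstarts big_geq. Qed.
Lemma nends1 : nends 1 = 0. Proof. by rewrite /nends big_geq. Qed.

Lemma nstartsS d : nstarts d.+1 = nstarts d + starts d.+1.
Proof. by rewrite /nstarts big_nat_recr. Qed.

Lemma nendsS d : 0 < d -> nends d.+1 = nends d + ends d.
Proof. by move=> d_gt0; rewrite /nends big_nat_recr. Qed.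

Lemma nstarts_mono : {homo nstarts : x y / x <= y}.
Proof. by apply: homo_leq (@leq_trans) _ => // d; rewrite nstartsS leq_addr. Qed.

Lemma nends_mono : {homo nends : x y / x <= y}.
Proof.
apply: homo_leq (@leq_trans) _ => // -[|d]; first by rewrite /nends !big_geq.
by rewrite [nends d.+2]nendsS // leq_addr.
Qed.

Lemma nstarts_nends d : 1 <= d <= D -> nstarts d = nends d + h d.
Proof.
elim: d => [//|[|d] IH] Hd; first by rewrite nstartsS nstarts0 nends1 /starts; case: (h 1).
rewrite nstartsS nendsS // IH /starts /ends; last lia.
have -> : (d.+1 == D) = false by apply/eqP; lia.
by case: (h d.+1); case: (h d.+2) => /=; lia.
Qed.

Lemma nends_last : 1 <= D -> nends D.+1 = nstarts D.
Proof.
by move=> D_gt0; rewrite nendsS // nstarts_nends ?D_gt0 ?leqnn // /ends eqxx andbT.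
Qed.

Lemma counters_run_const a b : 1 <= a <= b -> b <= D -> (forall d, a <= d <= b -> h d) ->
  nstarts b = nstarts a /\ nends b = nends a.
Proof.
move=> /andP[a_gt0 ab] bD on_ab; split.
  rewrite /nstarts (@big_cat_nat _ _ _ a.+1) //= [X in _ + X]big_nat_cond.
  rewrite [X in _ + X]big1 ?addn0 // => e /andP[/andP[ae eb] _].
  rewrite /starts (on_ab e.-1) ?orbF ?andbF; last lia.
  by case: eqP => //; lia.
rewrite /nends (@big_cat_nat _ _ _ a) //= [X in _ + X]big_nat_cond.
rewrite [X in _ + X]big1 ?addn0 // => e /andP[/andP[ae eb] _].
rewrite /ends (on_ab e.+1) ?orbF ?andbF; last lia.
by case: eqP => //; lia.
Qed.

Lemma run_start b : 1 <= b -> h b ->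
  exists a, [/\ 1 <= a <= b, forall d, a <= d <= b -> h d & (a == 1) || ~~ h a.-1].
Proof.
elim: b => [//|[|b] IH] _ hb.
  by exists 1; split=> // d /andP[d1 d1']; have -> : d = 1 by lia.
case hb': (h b.+1).
  have [a [ab on_ab start_a]] := IH isT hb'.
  exists a; split=> //; first lia.
  move=> d /andP[ad]; rewrite leq_eqVlt => /orP[/eqP-> //|db].
  by apply: on_ab; lia.
exists b.+2; split=> [|d dE|]; [lia | | by rewrite /= hb'].
by have -> : d = b.+2 by lia.
Qed.

Lemma run_end a : a <= D -> h a ->
  exists b, [/\ a <= b <= D, forall d, a <= d <= b -> h d & (b == D) || ~~ h b.+1].
Proof.
move=> aD; have [m ->] : exists m, a = D - m by exists (D - a); lia.
elim: m => [|m IH] ha.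
  rewrite subn0 in ha *; exists D; split=> [|d dE|]; [lia | by have -> : d = D by lia | by rewrite eqxx].
case: (leqP D m) => [Dm | mD].
  have E : D - m.+1 = D - m by lia.
  by rewrite E in ha *; exact: IH.
case hn: (h (D - m)).
  have [b [ab on_ab end_b]] := IH hn; exists b; split=> //; first lia.
  move=> d /andP[ad db]; case: (eqVneq d (D - m.+1)) => [-> // | dn].
  by apply: on_ab; lia.
exists (D - m.+1); split=> [|d dE|]; [lia | by have -> : d = D - m.+1 by lia |].
have -> : (D - m.+1).+1 = D - m by lia.
by rewrite hn orbT.
Qed.

Section MinLength.
Variable l : nat.
Hypotheses (l_gt0 : 0 < l) (min_run : forall a b, run a b -> l <= b - a + 1).

Lemma nends_le_nstarts_sub x : x <= D -> nends x.+1 <= nstarts (x.+1 - l).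
Proof.
elim: x => [|x IH] xD; first by rewrite nends1.
rewrite nendsS //; case ends_x: (ends x.+1); last first.
  by rewrite addn0 (leq_trans (IH (ltnW xD))) // nstarts_mono // leq_sub2r.
move: ends_x => /andP[on_x end_x].
have [a [/andP[a_gt0 ax] on_ax start_a]] := run_start (isT : 0 < x.+1) on_x.
have len : l <= x.+1 - a + 1 by apply: min_run; do ?split.
have [_ ->] := counters_run_const (a := a) (b := x.+1) ltac:(lia) xD on_ax.
have -> : nends a + true = nstarts a by rewrite nstarts_nends ?on_ax //; lia.
by apply: nstarts_mono; lia.
Qed.

Lemma nends_add_min_le d : d + l <= D.+1 -> nends (d + l) <= nstarts d.
Proof.
move=> dl; have := nends_le_nstarts_sub (x := (d + l).-1) ltac:(lia).
have -> : (d + l).-1.+1 = d + l by lia.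
by rewrite addnK.
Qed.

End MinLength.

Lemma nstarts_le_add_max u : (forall a b, run a b -> b - a + 1 <= u) ->
  forall d, d <= D -> nstarts d <= nends (d + u).
Proof.
move=> max_run; elim=> [|d IH] dD; first by rewrite nstarts0.
have [starts_d|] := boolP (starts d.+1); last first.
  rewrite nstartsS => /negbTE->; rewrite addn0.
  by rewrite (leq_trans (IH (ltnW dD))) // nends_mono // leq_add2r.
move: (starts_d) => /andP[on_d start_d].
have [b [/andP[db bD] on_db end_b]] := run_end dD on_d.
have len : b - d.+1 + 1 <= u by apply: max_run; do ?split.
rewrite nstarts_nends ?on_d; last lia.
have [_ <-] := counters_run_const (a := d.+1) (b := b) ltac:(lia) bD on_db.
apply: leq_trans (nends_mono (_ : b.+1 <= d.+1 + u)); last lia.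
rewrite nendsS /ends ?end_b ?(on_db b) //; lia.
Qed.

End Counters.

Lemma nends_compl D h d : 1 <= d <= D -> nends D (fun e => ~~ h e) d + h 1 = nstarts h d.
Proof.
elim: d => [//|[|d] IH] Hd.
  by rewrite nends1 nstartsS nstarts0 /starts; case: (h 1).
rewrite nendsS // nstartsS -IH /ends /starts; last lia.
have -> : (d.+1 == D) = false by apply/eqP; lia.
by case: (h d.+1); case: (h d.+2) => /=; lia.
Qed.

Lemma nstarts_compl D h d : 1 <= d <= D ->
  nstarts (fun e => ~~ h e) d + h 1 = nends D h d + 1.
Proof.
move=> Hd; have := nends_compl h Hd.
rewrite (nstarts_nends _ Hd) (nstarts_nends (fun e => ~~ h e) Hd).
by case: (h d) => /=; lia.
Qed.

Definition window_laws (D N : nat) (S T : nat -> nat) : Prop :=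
  forall d, 1 <= d <= D - 1 ->
    S d <= S d.+1 /\ T d <= T d.+1 /\ T d.+1 <= S d /\ S d.+1 <= T d + N.

(* Invariant under adding a constant to both counters ([T l = T 1] rather than
   [T l = 0]), so that it transfers to the shifted counters of off periods. *)
Definition length_laws (D l u : nat) (S T : nat -> nat) : Prop :=
  [/\ T l = T 1, S (D - l + 1) = S D,
      forall d, 1 <= d <= D - l -> T (d + l) <= S d
    & forall d, 1 <= d <= D - u -> S d <= T (d + u)].

Lemma window_laws_counters D h : window_laws D 1 (nstarts h) (nends D h).
Proof.
move=> d Hd; rewrite nstartsS nendsS; last lia.
rewrite (nstarts_nends (D := D)) /starts /ends; last lia.
have -> : (d == D) = false by apply/eqP; lia.
by case: (h d); case: (h d.+1) => /=; lia.
Qed.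

Lemma length_laws_counters D h l u : 1 <= l <= D ->
  (forall a b, run D h a b -> l <= b - a + 1 <= u) ->
  length_laws D l u (nstarts h) (nends D h).
Proof.
move=> /andP[l_gt0 lD] len_ab.
have lower := nends_add_min_le l_gt0 (fun a b r => proj1 (andP (len_ab a b r))).
have upper := nstarts_le_add_max (fun a b r => proj2 (andP (len_ab a b r))).
split=> [||d Hd|d Hd]; last by apply: upper; lia.
- by have := lower 0 ltac:(lia); rewrite nstarts0 nends1 add0n leqn0 => /eqP.
- have := lower (D - l + 1) ltac:(lia).
  have -> : D - l + 1 + l = D.+1 by lia.
  rewrite nends_last; last lia.
  by have := @nstarts_mono h (D - l + 1) D ltac:(lia); lia.
- by have := lower d ltac:(lia).
Qed.

Lemma length_laws_shift D l u S T S' T' c : 1 <= l <= D ->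
  (forall d, 1 <= d <= D -> S' d = S d + c /\ T' d = T d + c) ->
  length_laws D l u S T -> length_laws D l u S' T'.
Proof.
move=> Hl ST [Tl SDl lower upper].
have ES d : 1 <= d <= D -> S' d = S d + c by case/ST.
have ET d : 1 <= d <= D -> T' d = T d + c by case/ST.
split=> [||d Hd|d Hd].
- by rewrite !ET ?Tl //; lia.
- by rewrite !ES ?SDl //; lia.
- by rewrite ES ?ET ?leq_add2r ?lower //; lia.
- by rewrite ES ?ET ?leq_add2r ?upper //; lia.
Qed.

Lemma length_laws_off D h l u : 1 <= l <= D ->
  (forall a b, run D (fun e => ~~ h e) a b -> l <= b - a + 1 <= u) ->
  length_laws D l u (fun d => nends D h d + 1) (nstarts h).
Proof.
move=> Hl len_ab; apply: (length_laws_shift (c := h 1)) Hl _ (length_laws_counters Hl len_ab).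
by move=> d Hd; rewrite (nstarts_compl h Hd) (nends_compl h Hd).
Qed.

Lemma sum_addn1 n (F : 'I_n -> nat) : \sum_(i < n) (F i + 1) = \sum_(i < n) F i + n.
Proof. by rewrite big_split /= sum_nat_const card_ord muln1. Qed.

Section SumLaws.
Variables (n D : nat) (S T : nat -> nat) (s t : 'I_n -> nat -> nat).
Hypothesis sum_st : forall d, 1 <= d <= D -> S d = \sum_i s i d /\ T d = \sum_i t i d.

Let S_sum d : 1 <= d <= D -> S d = \sum_i s i d. Proof. by case/sum_st. Qed.
Let T_sum d : 1 <= d <= D -> T d = \sum_i t i d. Proof. by case/sum_st. Qed.

Lemma window_laws_sum : (forall i, window_laws D 1 (s i) (t i)) -> window_laws D n S T.
Proof.
move=> laws d Hd; rewrite !S_sum ?T_sum -?sum_addn1; try lia.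
by split; [|split; [|split]]; apply: leq_sum => i _; case: (laws i d Hd) => ? [? [? ?]].
Qed.

Lemma length_laws_sum l u : 1 <= l <= D ->
  (forall i, length_laws D l u (s i) (t i)) -> length_laws D l u S T.
Proof.
move=> Hl laws; split=> [||d Hd|d Hd].
- by rewrite !T_sum; try lia; apply: eq_bigr => i _; case: (laws i).
- by rewrite !S_sum; try lia; apply: eq_bigr => i _; case: (laws i).
- rewrite S_sum ?T_sum; try lia.
  by apply: leq_sum => i _; case: (laws i) => _ _ lower _; apply: lower.
- rewrite S_sum ?T_sum; try lia.
  by apply: leq_sum => i _; case: (laws i) => _ _ _ upper; apply: upper.
Qed.

End SumLaws.

Section Window.
Variable N : nat.

Definition in_window (a b i : nat) : bool := has (fun k => k %% N == i) (iota a (b - a)).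

Lemma in_windowP a b i : reflect (exists k, [/\ a <= k, k < b & k %% N = i]) (in_window a b i).
Proof.
apply: (iffP hasP) => [[k] | [k [ak kb <-]]].
  by rewrite mem_iota => ak /eqP <-; exists k; split=> //; lia.
by exists k; rewrite ?mem_iota //; lia.
Qed.

Lemma eq_mod_window a k k' : a <= k < a + N -> a <= k' < a + N -> k %% N = k' %% N -> k = k'.
Proof.
wlog kk' : k k' / k <= k' => [wlog_kk' Hk Hk' kk'N|].
  by case: (leqP k k') => [|/ltnW] /wlog_kk' ->.
move=> Hk Hk' /eqP; have -> : k' = k + (k' - k) by lia.
by rewrite -[k in k %% N]addn0 eq_sym eqn_modDl mod0n modn_small; lia.
Qed.

Lemma in_window_cat a m b i : a <= m <= b ->
  in_window a b i = in_window a m i || in_window m b i.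
Proof.
move=> amb; rewrite /in_window -has_cat.
have -> : b - a = (m - a) + (b - m) by lia.
by rewrite iotaD subnKC //; case/andP: amb.
Qed.

Lemma in_window1 b i : in_window b b.+1 i = (b %% N == i).
Proof. by rewrite /in_window subSnn /= orbF. Qed.

Lemma in_window_disjoint a b c d i : b <= c -> d <= a + N ->
  in_window a b i -> ~~ in_window c d i.
Proof.
move=> bc da /in_windowP[k [ak kb <-]]; apply/in_windowP => -[k' [ck' k'd k'k]].
by have := @eq_mod_window a k k' ltac:(lia) ltac:(lia) (esym k'k); lia.
Qed.

Lemma in_window_full a i : i < N -> in_window a (a + N) i.
Proof.
move=> iN; have N_gt0 : 0 < N by lia.
apply/in_windowP; exists (a + (i + N - a %% N) %% N); split.
- exact: leq_addr.
- by rewrite ltn_add2l ltn_pmod.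
rewrite modnDmr.
have -> : a + (i + N - a %% N) = (a %/ N).+1 * N + i.
  by move: (divn_eq a N) (ltn_pmod a N_gt0); rewrite mulSn; lia.
by rewrite modnMDl modn_small.
Qed.

Lemma sum_in_window a b : a <= b <= a + N -> \sum_(i < N) in_window a b i = b - a.
Proof.
case/andP=> ab; have [m ->] : exists m, b = a + m by exists (b - a); lia.
rewrite addKn leq_add2l; elim: m => [_ | m IH mN].
  by rewrite big1 // => i _; rewrite /in_window addn0 subnn.
have N_gt0 : 0 < N by lia.
have split_i (i : 'I_N) :
    in_window a (a + m.+1) i = in_window a (a + m) i + ((a + m) %% N == i) :> nat.
  rewrite addnS (@in_window_cat a (a + m)) ?in_window1; last lia.
  have := @in_window_disjoint a (a + m) (a + m) (a + m).+1 i (leqnn _) ltac:(lia).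
  by rewrite in_window1 => /implyP; case: (in_window a (a + m) i); case: (_ %% N == _).
rewrite (eq_bigr _ (fun i _ => split_i i)) big_split /= IH ?(ltnW mN) //.
rewrite (bigD1 (Ordinal (ltn_pmod (a + m) N_gt0))) //= eqxx big1 ?addn0 ?addn1 //.
by move=> j /eqP nj; apply/eqP; rewrite eqb0; apply/eqP => jE; apply: nj; apply: val_inj.
Qed.

Lemma in_window_compl a b i : i < N -> a <= b <= a + N ->
  ~~ in_window a b i = in_window b (a + N) i.
Proof.
move=> iN ab; have := in_window_full a iN; rewrite (in_window_cat _ ab).
have /implyP := @in_window_disjoint a b b (a + N) i (leqnn _) (leqnn _).
by case: (in_window a b i); case: (in_window b _ i).
Qed.

Lemma in_window_starts a1 b1 a2 b2 i : a1 <= a2 <= b1 -> b1 <= b2 <= a1 + N ->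
  in_window a2 b2 i && ~~ in_window a1 b1 i = in_window b1 b2 i.
Proof.
move=> /andP[a12 a2b1] /andP[b12 b2a1].
rewrite (@in_window_cat a2 b1) ?(@in_window_cat a1 a2 b1) ?a12 ?a2b1 ?b12 //.
have /implyP := @in_window_disjoint a1 a2 b1 b2 i a2b1 b2a1.
have /implyP := @in_window_disjoint a2 b1 b1 b2 i (leqnn _) ltac:(lia).
by case: (in_window a1 a2 i); case: (in_window a2 b1 i); case: (in_window b1 b2 i).
Qed.

Lemma in_window_ends a1 b1 a2 b2 i : a1 <= a2 <= b1 -> b1 <= b2 <= a1 + N ->
  in_window a1 b1 i && ~~ in_window a2 b2 i = in_window a1 a2 i.
Proof.
move=> /andP[a12 a2b1] /andP[b12 b2a1].
rewrite (@in_window_cat a2 b1) ?(@in_window_cat a1 a2 b1) ?a12 ?a2b1 ?b12 //.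
have /implyP := @in_window_disjoint a1 a2 a2 b1 i (leqnn _) ltac:(lia).
have /implyP := @in_window_disjoint a1 a2 b1 b2 i a2b1 b2a1.
by case: (in_window a1 a2 i); case: (in_window a2 b1 i); case: (in_window b1 b2 i).
Qed.

End Window.

Lemma window_laws_mono D N S T : window_laws D N S T ->
  forall x y, 1 <= x <= y -> y <= D -> S x <= S y /\ T x <= T y.
Proof.
move=> window x y /andP[x_gt0 xy]; elim: y xy => [|y IH] xy yD; first lia.
case: (eqVneq x y.+1) => [-> // | x_ne].
have [SyS [TyT _]] := window y ltac:(lia).
by have [] := IH ltac:(lia) ltac:(lia); lia.
Qed.

Lemma window_laws_dual D N S T : window_laws D N S T -> window_laws D N (fun d => T d + N) S.
Proof. by move=> window d Hd; have [? [? [? ?]]] := window d Hd; rewrite !leq_add2r. Qed.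

Section WindowSchedule.
Variables (D N : nat) (S T : nat -> nat) (i : nat) (h : nat -> bool).
Hypotheses (window : window_laws D N S T)
  (h_window : forall d, 1 <= d <= D -> h d = in_window N (T d) (S d) i).

Lemma run_window_period a b : run D h a b ->
  exists k, [/\ T b <= k < S a, (a == 1) || (S a.-1 <= k) & (b == D) || (k < T b.+1)].
Proof.
move=> [a_gt0 [ab [bD [on_ab [start_a end_b]]]]].
have /in_windowP[k [Tak kSa ki]] : in_window N (T a) (S a) i by rewrite -h_window ?on_ab; lia.
(* The next day's period of worker [i] has the same residue as [k] and lies in
   the same window of N consecutive numbers, hence equals [k]. *)
have hold d : a <= d <= b -> T d <= k < S d.
  elim: d => [|d IH] Hd; first lia.
  case: (eqVneq d.+1 a) => [-> | ne]; first by rewrite Tak kSa.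
  have /andP[Tdk kSd] := IH ltac:(lia).
  have [SdS [TdT [TSd SdT]]] := @window d ltac:(lia).
  have /in_windowP[k' [Tk' k'S k'i]] : in_window N (T d.+1) (S d.+1) i.
    by rewrite -h_window ?on_ab; lia.
  have kk' : k = k' by apply: (@eq_mod_window N (T d)); [lia | lia | rewrite ki k'i].
  by subst k'; apply/andP; split.
exists k; split.
- by have := hold a ltac:(lia); have := hold b ltac:(lia); lia.
- case: eqP start_a => //= a_ne1; rewrite h_window; last lia.
  rewrite leqNgt; apply: contra => kS; apply/in_windowP; exists k; split=> //.
  by have [_] := window_laws_mono window (x := a.-1) (y := a) ltac:(lia) ltac:(lia); lia.
- case: eqP end_b => //= b_ne_D; rewrite h_window; last lia.
  rewrite ltnNge; apply: contra => Tk; apply/in_windowP; exists k; split=> //.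
  have [] := window_laws_mono window (x := b) (y := b.+1) ltac:(lia) ltac:(lia).
  by have := hold b ltac:(lia); lia.
Qed.

Lemma run_window_length l u a b : 1 <= l <= D -> length_laws D l u S T ->
  run D h a b -> l <= b - a + 1 <= u.
Proof.
move=> Hl [Tl SDl lower upper] r; have [a_gt0 [ab [bD _]]] := r.
have [k [/andP[Tbk kSa] k_start k_end]] := run_window_period r.
have mono := window_laws_mono window.
apply/andP; split; rewrite leqNgt; apply/negP => len.
- have {}k_end : b < D -> k < T b.+1 by case: eqP k_end => [-> | _ /= ?] ?; lia.
  case: eqP k_start => [a1 _ | a_ne1 /= Sak].
    have := k_end ltac:(lia); have [_] := mono 1 b ltac:(lia) ltac:(lia).
    by have [_] := mono b.+1 l ltac:(lia) ltac:(lia); lia.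
  case: (leqP a.-1 (D - l)) => [aDl | aDl].
    have := lower a.-1 ltac:(lia); have := k_end ltac:(lia).
    by have [_] := mono b.+1 (a.-1 + l) ltac:(lia) ltac:(lia); lia.
  have [] := mono (D - l + 1) a.-1 ltac:(lia) ltac:(lia).
  by have [] := mono a D ltac:(lia) ltac:(lia); lia.
- have := upper a ltac:(lia).
  by have [_] := mono (a + u) b ltac:(lia) ltac:(lia); lia.
Qed.

End WindowSchedule.

Lemma sum_window_counters D N S T : 0 < N -> T 1 = 0 -> window_laws D N S T ->
  (forall d, 1 <= d <= D -> S d <= T d + N) ->
  forall d, 1 <= d <= D ->
  \sum_(i < N) nstarts (fun e => in_window N (T e) (S e) i) d = S d /\
  \sum_(i < N) nends D (fun e => in_window N (T e) (S e) i) d = T d.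
Proof.
move=> N_gt0 T1 window S_le; elim=> [//|[|d] IH] Hd.
  split; last by rewrite T1 big1 // => i _; rewrite nends1.
  rewrite (eq_bigr (fun i : 'I_N => in_window N (T 1) (S 1) i : nat)) => [|i _]; last first.
    by rewrite nstartsS nstarts0 /starts eqxx andbT.
  by rewrite sum_in_window T1 ?subn0 //; have := S_le 1 Hd; lia.
have [SdS [TdT [TSd SdT]]] := window d.+1 ltac:(lia).
have [IHS IHT] := IH ltac:(lia).
split.
  rewrite (eq_bigr _ (fun i _ => nstartsS _ _)) big_split /= IHS.
  rewrite (eq_bigr (fun i : 'I_N => in_window N (S d.+1) (S d.+2) i : nat)) => [|i _]; last first.
    by rewrite /starts /= in_window_starts //; lia.
  by rewrite sum_in_window; lia.
rewrite (eq_bigr _ (fun i _ => nendsS _ _ _)) // big_split /= IHT.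
rewrite (eq_bigr (fun i : 'I_N => in_window N (T d.+1) (T d.+2) i : nat)) => [|i _]; last first.
  rewrite /ends; have -> : (d.+1 == D) = false by apply/eqP; lia.
  by rewrite /= in_window_ends //; lia.
by rewrite sum_in_window; lia.
Qed.

Lemma sum_bool_le (F : nat -> bool) x : \sum_(1 <= d < x.+1) F d <= x.
Proof.
apply: (@leq_trans (\sum_(1 <= d < x.+1) 1)); first by apply: leq_sum => d _; apply: leq_b1.
by rewrite sum_nat_const_nat muln1 subn1.
Qed.

Definition counter_laws (I : instance) (S T : nat -> nat) : Prop :=
  [/\ T 1 = 0, window_laws (D I) (N I) S T, length_laws (D I) (lw I) (uw I) S T,
      length_laws (D I) (lo I) (uo I) (fun d => T d + N I) S
    & forall d, 1 <= d <= D I -> rl I d <= S d - T d <= ru I d].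

Section Schedules.
Variable I : instance.
Implicit Types (f : schedule I) (S T : nat -> nat).

Lemma S_countE f d : S_count f d = \sum_(n < N I) nstarts (f n) d.
Proof. by rewrite /S_count exchange_big. Qed.

Lemma T_countE f d : T_count f d = \sum_(n < N I) nends (D I) (f n) d.
Proof. by rewrite /T_count exchange_big. Qed.

Lemma off_periodE f n a b : off_period f n a b <-> run (D I) (fun e => ~~ f n e) a b.
Proof. by rewrite /off_period /run !negbK. Qed.

Lemma feasible_counter_laws f S T : 1 <= lw I <= D I -> 1 <= lo I <= D I ->
  represents f S T -> feasible_schedule f -> counter_laws I S T.
Proof.
move=> Hlw Hlo rep [num_ok [work_ok [off_ok _]]].
have ST d : 1 <= d <= D I ->
    S d = \sum_n nstarts (f n) d /\ T d = \sum_n nends (D I) (f n) d.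
  by move=> Hd; have [-> ->] := rep d Hd; rewrite S_countE T_countE.
split.
- by have [_ ->] := ST 1 ltac:(lia); rewrite big1 // => n _; rewrite nends1.
- by apply: window_laws_sum ST _ => n; apply: window_laws_counters.
- by apply: (length_laws_sum ST Hlw) => n; apply: length_laws_counters Hlw (work_ok n).
- have ST_off d : 1 <= d <= D I ->
      T d + N I = \sum_n (nends (D I) (f n) d + 1) /\ S d = \sum_n nstarts (f n) d.
    by move=> Hd; have [-> ->] := ST d Hd; rewrite sum_addn1.
  apply: (length_laws_sum ST_off Hlo) => n.
  by apply: length_laws_off Hlo _ => a b r; apply: (off_ok n); apply/off_periodE.
- move=> d Hd; have [-> ->] := ST d Hd.
  have -> : \sum_n nstarts (f n) d = \sum_n nends (D I) (f n) d + num_on f d.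
    by rewrite /num_on -big_split; apply: eq_bigr => n _; apply: nstarts_nends.
  by rewrite addKn; apply: num_ok.
Qed.

(* Work period number k (counted from 0 in order of start) goes to worker
   k mod N. *)
Definition cyclic_schedule S T : schedule I := fun n d => in_window (N I) (T d) (S d) n.

Lemma cyclic_schedule_feasible S T : LDODOSP_instance I ->
  1 <= lw I <= D I -> 1 <= lo I <= D I -> counter_laws I S T ->
  represents (cyclic_schedule S T) S T /\ feasible_schedule (cyclic_schedule S T).
Proof.
move=> [[_ [N_gt0 r_ok]] [Uw_D Uo_D]] Hlw Hlo [T1 window work_laws off_laws range].
have active d : 1 <= d <= D I -> T d <= S d <= T d + N I.
  move=> Hd; have [_ ru_N] := r_ok d Hd; have /andP[_ ru_d] := range d Hd.
  case: d Hd ru_N ru_d => [|[|d]] Hd ru_N ru_d; first lia.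
    by rewrite T1; lia.
  by have [SdS [_ [TSd _]]] := window d.+1 ltac:(lia); lia.
have S_le d : 1 <= d <= D I -> S d <= T d + N I by case/active/andP.
split.
  move=> d Hd; rewrite S_countE T_countE.
  by have [-> ->] := sum_window_counters N_gt0 T1 window S_le Hd.
split; [|split; [|split; [|split]]].
- by move=> d Hd; rewrite /num_on sum_in_window ?active //; apply: range.
- by move=> n a b; apply: (run_window_length window (fun _ _ => erefl) Hlw work_laws).
- move=> n a b r; have {}r := proj1 (off_periodE _ _ _ _) r.
  apply: (run_window_length (window_laws_dual window) _ Hlo off_laws r) => d Hd.
  by rewrite /cyclic_schedule in_window_compl ?active.
- by move=> n; rewrite Uw_D sum_bool_le.
- by move=> n; rewrite Uo_D; apply: sum_bool_le.
Qed.

End Schedules.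

Theorem corollary5p10 (I : instance) (S T : nat -> nat) :
  LDODOSP_instance I ->
  1 <= lw I <= D I -> 1 <= lo I <= D I ->
  period_counters I S T ->
  feasible_counters I S T <->
  (T 1 = 0 /\
   (forall d, 1 <= d <= D I - 1 ->
      S d <= S d.+1 /\ T d <= T d.+1 /\ T d.+1 <= S d /\ S d.+1 <= T d + N I) /\
   (T (lw I) = 0 /\ S (D I - lw I + 1) = S (D I)) /\
   (forall d, 1 <= d <= D I - lw I -> T (d + lw I) <= S d) /\
   (forall d, 1 <= d <= D I - uw I -> S d <= T (d + uw I)) /\
   (S 1 = S (lo I) /\ T (D I - lo I + 1) = T (D I)) /\
   (forall d, 1 <= d <= D I - lo I -> S (d + lo I) - N I <= T d) /\
   (forall d, 1 <= d <= D I - uo I -> T d + N I <= S (d + uo I)) /\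
   (forall d, 1 <= d <= D I -> rl I d <= S d - T d <= ru I d)).
Proof.
move=> LI Hlw Hlo _.
have -> : feasible_counters I S T <-> counter_laws I S T.
  split=> [[f [rep feas]] | laws]; first exact: feasible_counter_laws rep feas.
  by exists (cyclic_schedule S T); apply: cyclic_schedule_feasible.
split.
- case=> T1 window [Tlw SDlw lower_w upper_w] [Slo TDlo lower_o upper_o] range.
  split=> //; split=> //; split; first by rewrite Tlw.
  split=> //; split=> //; split.
    by split; [rewrite Slo | apply/eqP; rewrite -(eqn_add2r (N I)) TDlo].
  by split=> // d Hd; rewrite leq_subLR [N I + _]addnC lower_o.
- case=> T1 [window [[Tlw SDlw] [lower_w [upper_w [[Slo TDlo] [lower_o [upper_o range]]]]]]].
  split=> //; first by split; rewrite ?Tlw ?T1.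
  split=> // [|d Hd]; first by rewrite TDlo.
  by rewrite [T d + _]addnC -leq_subLR lower_o.
Qed.
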